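(* Let $\gamma$ be a real number with $0<\gamma<1$. Then there exist an infinite binary sequence $\omega=\omega_0\omega_1\omega_2\ldots$ and an integer $N$ such that for every finite set $A\subset\mathbb{N}$ with $\#A\ge N$ there exists $t\in A$ with $$K(A,\omega(A)\mid t)\ \ge\ \gamma\cdot \#A .$$
   Context: $K(\cdot\mid\cdot)$ denotes conditional prefix Kolmogorov complexity; finite subsets of $\mathbb{N}$, natural numbers and binary strings are encoded as finite objects in a standard computable way, and $K(A,\omega(A)\mid t)$ is the complexity of the pair $(A,\omega(A))$ given $t$. For an infinite binary sequence $\omega$ and a finite set $A\subset\mathbb{N}$, $\omega(A)$ denotes the binary string of length $\#A$ formed by the bits $\omega_i$, $i\in A$, listed in increasing order of $i$. *)

From Stdlib Require Import Reals List Arith Sorting.Sorted.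
Import ListNotations.
Open Scope R_scope.

Inductive rf : Type :=
| RZero : rf
| RSucc : rf
| RProj : nat -> rf
| RComp : rf -> list rf -> rf
| RPrim : rf -> rf -> rf
| RMu   : rf -> rf.

Inductive eval : rf -> list nat -> nat -> Prop :=
| ev_zero : forall v, eval RZero v 0
| ev_succ : forall v, eval RSucc v (S (hd 0%nat v))
| ev_proj : forall i v, eval (RProj i) v (nth i v 0%nat)
| ev_comp : forall f gs v ws y,
    evals gs v ws -> eval f ws y -> eval (RComp f gs) v y
| ev_prim0 : forall f g v y, eval f v y -> eval (RPrim f g) (0%nat :: v) y
| ev_primS : forall f g n v z y,
    eval (RPrim f g) (n :: v) z -> eval g (n :: z :: v) y ->
    eval (RPrim f g) (S n :: v) y
| ev_mu : forall f v n,
    eval f (n :: v) 0%nat ->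
    (forall m, (m < n)%nat -> exists k, eval f (m :: v) (S k)) ->
    eval (RMu f) v n
with evals : list rf -> list nat -> list nat -> Prop :=
| evs_nil : forall v, evals [] v []
| evs_cons : forall g gs v y ys,
    eval g v y -> evals gs v ys -> evals (g :: gs) v (y :: ys).

(** Prefix-free binary description of a machine (program text). *)
Fixpoint unary (n : nat) : list bool :=
  match n with O => [false] | S k => true :: unary k end.

Fixpoint enc (f : rf) : list bool :=
  match f with
  | RZero => [false; false; false]
  | RSucc => [false; false; true]
  | RProj i => [false; true; false] ++ unary i
  | RComp g gs =>
      [false; true; true] ++ enc g ++
      (fix encl (l : list rf) : list bool :=
         match l with
         | [] => [false]
         | h :: t => true :: enc h ++ encl t
         end) gs
  | RPrim g h => [true; false; false] ++ enc g ++ enc h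
  | RMu g => [true; false; true] ++ enc g
  end.

Definition cpair (a b : nat) : nat := (((a + b) * (a + b + 1)) / 2 + b)%nat.

Fixpoint code_bits (s : list bool) : nat :=
  match s with
  | [] => 0%nat
  | b :: t => (2 * code_bits t + (if b then 2 else 1))%nat
  end.

Fixpoint code_list (l : list nat) : nat :=
  match l with
  | [] => 0%nat
  | x :: t => S (cpair x (code_list t))
  end.

(** A finite set A ⊂ ℕ is represented by its strictly increasing listing. *)
Definition code_finset (A : list nat) : nat := code_list A.

Definition restrict (omega : nat -> bool) (A : list nat) : list bool :=
  map omega A.

Definition is_prefix (p q : list bool) : Prop := exists r, q = p ++ r.

Definition prefix_free (M : rf) (y : nat) : Prop :=
  forall p q a b,
    eval M [code_bits p; y] a -> eval M [code_bits q; y] b ->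
    is_prefix p q -> p = q.

(** The universal prefix machine U(enc M ++ p | y) := M(p | y);
    a description of x given y is a pair (M, p) with M prefix-free
    and M(p | y) = x; its length is |enc M| + |p|. *)
Definition description (x y : nat) (M : rf) (p : list bool) : Prop :=
  prefix_free M y /\ eval M [code_bits p; y] x.

(** [K_ge x y r] : K(x | y) >= r, i.e. every description of x given y
    has length at least r (K = +infinity if there is none). *)
Definition K_ge (x y : nat) (r : R) : Prop :=
  forall M p, description x y M p ->
    r <= INR (length (enc M) + length p).

(* Call a pattern (A, x) with #A = m >= N compressible if K((A, x) | t) < gamma m for
   every t in A.  Descriptions are distinct binary words, so for fixed t and m fewer than
   2^(gamma m + 1) patterns are compressible, and few of them pass through any given
   point.  A counting form of the Lovasz local lemma (Rumyantsev-Shen) with weights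
   alpha^(-#A), alpha = 2^((1 + gamma)/2), shows that deleting one point from the allowed
   support divides the number of pattern-avoiding words by at most alpha; so for every n
   some word of length n contains no compressible pattern inside [0, n).  The weight
   condition reduces to 2 alpha sum_(m >= N) r^m <= 2 - alpha with r = 2^((gamma - 1)/2) < 1,
   true for large N.  Koenig's lemma turns these finite words into the sequence omega. *)

From Stdlib Require Import Reals List Arith Lia Lra Sorting.Sorted Classical FinFun ZArith.
From Stdlib Require ClassicalEpsilon.
Import ListNotations.
Local Open Scope nat_scope.

Fixpoint eval_functional f v y (H : eval f v y) {struct H} :
  forall y', eval f v y' -> y = y'
with evals_functional gs v ys (H : evals gs v ys) {struct H} :
  forall ys', evals gs v ys' -> ys = ys'.
Proof.
  - destruct H; intros y' H'; inversion H'; subst; auto.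
    + assert (ws = ws0) as <- by (eapply evals_functional; eassumption).
      eapply eval_functional; eassumption.
    + eapply eval_functional; eassumption.
    + assert (z = z0) as <- by (eapply eval_functional; eassumption).
      eapply eval_functional; eassumption.
    + match goal with
      | Hn : eval f (n :: v) 0, Hy : eval f (y' :: v) 0,
        Bn : forall m, m < n -> _, By : forall m, m < y' -> _ |- _ =>
        destruct (lt_eq_lt_dec n y') as [[Hlt|Heq]|Hlt]; auto;
        [ destruct (By n Hlt) as [k Hk]; discriminate (eval_functional _ _ _ Hn _ Hk)
        | destruct (Bn y' Hlt) as [k Hk]; discriminate (eval_functional _ _ _ Hk _ Hy) ]
      end.
  - destruct H; intros ys' H'; inversion H'; subst; auto.
    f_equal; [eapply eval_functional | eapply evals_functional]; eassumption.
Qed.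

Fixpoint encl (l : list rf) : list bool :=
  match l with [] => [false] | h :: t => true :: enc h ++ encl t end.

Lemma enc_comp g gs : enc (RComp g gs) = [false; true; true] ++ enc g ++ encl gs.
Proof. reflexivity. Qed.

Lemma unary_app_inj i j r s : unary i ++ r = unary j ++ s -> i = j /\ r = s.
Proof.
  revert j; induction i; destruct j; simpl; intros H; inversion H; auto.
  destruct (IHi j H1); subst; auto.
Qed.

Fixpoint rf_nested_ind (P : rf -> Prop)
  (H0 : P RZero) (H1 : P RSucc) (H2 : forall i, P (RProj i))
  (H3 : forall g gs, P g -> Forall P gs -> P (RComp g gs))
  (H4 : forall g h, P g -> P h -> P (RPrim g h))
  (H5 : forall g, P g -> P (RMu g)) (f : rf) {struct f} : P f :=
  let IH := rf_nested_ind P H0 H1 H2 H3 H4 H5 in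
  match f with
  | RZero => H0 | RSucc => H1 | RProj i => H2 i
  | RComp g gs => H3 g gs (IH g)
      ((fix go (l : list rf) : Forall P l :=
         match l with [] => Forall_nil _ | h :: t => Forall_cons h (IH h) (go t) end) gs)
  | RPrim g h => H4 g h (IH g) (IH h)
  | RMu g => H5 g (IH g)
  end.

Definition enc_app_injective f :=
  forall g r s, enc f ++ r = enc g ++ s -> f = g /\ r = s.

Lemma encl_app_inj l : Forall enc_app_injective l ->
  forall l' r s, encl l ++ r = encl l' ++ s -> l = l' /\ r = s.
Proof.
  induction 1 as [|f l Hf _ IH]; intros [|f' l'] r s E; simpl in E;
    try discriminate E; injection E as E; auto.
  rewrite <- !app_assoc in E.
  apply Hf in E as [-> E]. apply IH in E as [-> ->]; auto.
Qed.

Lemma enc_app_inj f : enc_app_injective f.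
Proof.
  induction f as [| | i | f gs IHf IHgs | f h IHf IHh | f IHf] using rf_nested_ind;
    intros [| | j | g hs | g h' | g] r s E; rewrite ?enc_comp in E; simpl in E;
    try discriminate E; injection E as E; rewrite <- ?app_assoc in E.
  - auto.
  - auto.
  - apply unary_app_inj in E as [-> ->]; auto.
  - apply IHf in E as [-> E]. apply (encl_app_inj _ IHgs) in E as [-> ->]; auto.
  - apply IHf in E as [-> E]. apply IHh in E as [-> ->]; auto.
  - apply IHf in E as [-> ->]; auto.
Qed.

Lemma code_bits_inj s t : code_bits s = code_bits t -> s = t.
Proof.
  revert t; induction s as [|a s IH]; intros [|b t]; simpl; intros H; auto.
  - destruct b; lia.
  - destruct a; lia.
  - destruct a, b; try lia; f_equal; apply IH; lia.
Qed.

Definition triangle s := (s * (s + 1)) / 2.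

Lemma triangle_S s : triangle (S s) = triangle s + S s.
Proof.
  unfold triangle. replace (S s * (S s + 1)) with (s * (s + 1) + S s * 2) by lia.
  rewrite Nat.div_add; lia.
Qed.

Lemma triangle_gap s s' : s < s' -> triangle s + s < triangle s'.
Proof. induction 1; rewrite triangle_S; lia. Qed.

Lemma cpair_inj a b c d : cpair a b = cpair c d -> a = c /\ b = d.
Proof.
  unfold cpair; fold (triangle (a + b)) (triangle (c + d)); intros H.
  destruct (lt_eq_lt_dec (a + b) (c + d)) as [[Hl|He]|Hl].
  - pose proof (triangle_gap _ _ Hl); lia.
  - rewrite He in H; lia.
  - pose proof (triangle_gap _ _ Hl); lia.
Qed.

Lemma code_list_inj l l' : code_list l = code_list l' -> l = l'.
Proof.
  revert l'; induction l; intros [|x l']; simpl; intros H; try discriminate; auto.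
  injection H as H. apply cpair_inj in H as [-> H]. f_equal; auto.
Qed.

Definition code_pattern (P : list nat * list bool) :=
  cpair (code_finset (fst P)) (code_bits (snd P)).

Lemma code_pattern_inj P Q : code_pattern P = code_pattern Q -> P = Q.
Proof.
  destruct P, Q; unfold code_pattern, code_finset; simpl; intros H.
  apply cpair_inj in H as [H1 H2].
  apply code_list_inj in H1; apply code_bits_inj in H2; subst; auto.
Qed.

Lemma length_le_of_injective_rel {A B : Type} (eqB : forall x y : B, {x = y} + {x <> y})
  (Rl : A -> B -> Prop) (l : list A) (l' : list B) :
  NoDup l ->
  (forall a, In a l -> exists b, In b l' /\ Rl a b) ->
  (forall a a' b, In a l -> In a' l -> Rl a b -> Rl a' b -> a = a') ->
  length l <= length l'.
Proof.
  intros Hnd; revert l'; induction Hnd as [|a l Ha Hnd IH]; intros l' Hex Hinj; simpl; [lia|].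
  destruct (Hex a (or_introl eq_refl)) as [b [Hb Rb]].
  assert (length l <= length (remove eqB b l')).
  { apply IH.
    - intros a' Ha'. destruct (Hex a' (or_intror Ha')) as [b' [Hb' Rb']].
      exists b'. split; auto. apply in_in_remove; auto.
      intros ->. apply Ha. rewrite <- (Hinj a' a b); simpl; auto.
    - intros; apply (Hinj a0 a' b0); simpl; auto. }
  pose proof (remove_length_lt eqB l' b Hb). lia.
Qed.

Lemma NoDup_flat_map_disjoint {A B : Type} (f : A -> list B) (l : list A) :
  NoDup l -> (forall a, In a l -> NoDup (f a)) ->
  (forall a a' y, In a l -> In a' l -> In y (f a) -> In y (f a') -> a = a') ->
  NoDup (flat_map f l).
Proof.
  induction 1 as [|a l Ha Hnd IH]; intros Hf Hd; simpl; [constructor|].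
  apply NoDup_app.
  - apply Hf; left; auto.
  - apply IH; [intros; apply Hf; right; auto | intros; eapply Hd; eauto; right; auto].
  - intros y Hy Hy'. apply in_flat_map in Hy' as [a' [Ha' Hy']].
    assert (a = a') by (eapply Hd; eauto; [left; auto | right; auto]). subst; auto.
Qed.

Lemma NoDup_map_cons {A} (b : A) l : NoDup l -> NoDup (map (cons b) l).
Proof. apply Injective_map_NoDup. intros x y E; injection E; auto. Qed.

Fixpoint words (n : nat) : list (list bool) :=
  match n with
  | 0 => [[]]
  | S k => map (cons false) (words k) ++ map (cons true) (words k)
  end.

Lemma In_words n w : In w (words n) <-> length w = n.
Proof.
  revert w; induction n; intros w; simpl.
  - split; [intros [<-|[]]; auto | destruct w; simpl; try discriminate; auto].
  - rewrite in_app_iff, !in_map_iff. split.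
    + intros [[w' [<- H]]|[w' [<- H]]]; simpl; f_equal; apply IHn; auto.
    + destruct w as [|b w]; simpl; try discriminate. intros H; injection H as H.
      destruct b; [right|left]; exists w; split; auto; apply IHn; auto.
Qed.

Lemma NoDup_words n : NoDup (words n).
Proof.
  induction n; simpl; [repeat constructor; auto|].
  apply NoDup_app; try apply NoDup_map_cons; auto.
  intros a Ha Hb. apply in_map_iff in Ha as [? [<- _]].
  apply in_map_iff in Hb as [? [H _]]; discriminate.
Qed.

Lemma length_words n : length (words n) = 2 ^ n.
Proof. induction n; simpl; auto. rewrite length_app, !length_map. lia. Qed.

Definition words_below (L : nat) := flat_map words (seq 0 L).

Lemma In_words_below L w : length w < L -> In w (words_below L).
Proof.
  intros H. apply in_flat_map. exists (length w).
  split; [apply in_seq; lia | apply In_words; auto].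
Qed.

Lemma length_words_below L : length (words_below L) < 2 ^ L.
Proof.
  induction L; [simpl; lia|].
  unfold words_below in *. rewrite seq_S, flat_map_app. simpl.
  rewrite length_app, app_nil_r, length_words. lia.
Qed.

(* Distinct descriptions of length [< L] are distinct words of length [< L]; they
   determine their object because the machine is a function of its input. *)
Lemma few_simple_patterns (l : list (list nat * list bool)) t r L :
  NoDup l -> (forall P, In P l -> ~ K_ge (code_pattern P) t r) -> (r <= INR L)%R ->
  length l < 2 ^ L.
Proof.
  intros Hnd Hsimple Hr.
  eapply Nat.le_lt_trans; [|apply (length_words_below L)].
  apply (length_le_of_injective_rel (list_eq_dec Bool.bool_dec)
     (fun P w => exists M p, description (code_pattern P) t M p /\ w = enc M ++ p)); auto.
  - intros P HP. specialize (Hsimple P HP). unfold K_ge in Hsimple.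
    apply not_all_ex_not in Hsimple as [M Hb]. apply not_all_ex_not in Hb as [p Hb].
    apply imply_to_and in Hb as [Hd Hlt]. apply Rnot_le_lt in Hlt.
    exists (enc M ++ p). split; [|exists M, p; auto].
    apply In_words_below. rewrite length_app. apply INR_lt. lra.
  - intros P Q w _ _ [M [p [[_ H1] ->]]] [M' [p' [[_ H2] E]]].
    destruct (enc_app_inj M M' p p' E) as [-> ->].
    apply code_pattern_inj. eapply eval_functional; eauto.
Qed.

Definition holds (P : Prop) : bool :=
  if ClassicalEpsilon.excluded_middle_informative P then true else false.

Lemma holds_true P : holds P = true <-> P.
Proof.
  unfold holds; destruct ClassicalEpsilon.excluded_middle_informative; split; auto; discriminate.
Qed.

Lemma holds_iff P Q : (P <-> Q) -> holds P = holds Q.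
Proof.
  intros H. unfold holds.
  destruct ClassicalEpsilon.excluded_middle_informative,
           ClassicalEpsilon.excluded_middle_informative; tauto.
Qed.

Definition mem (j : nat) (B : list nat) : bool := existsb (Nat.eqb j) B.

Lemma mem_In j B : mem j B = true <-> In j B.
Proof.
  unfold mem; rewrite existsb_exists. split.
  - intros [x [H1 H2]]. apply Nat.eqb_eq in H2; subst; auto.
  - intros H; exists j; split; auto. apply Nat.eqb_refl.
Qed.

Definition minus (S B : list nat) : list nat := filter (fun j => negb (mem j B)) S.

Lemma In_minus j S B : In j (minus S B) <-> In j S /\ ~ In j B.
Proof.
  unfold minus; rewrite filter_In, Bool.negb_true_iff, <- Bool.not_true_iff_false, mem_In.
  reflexivity.
Qed.

Lemma minus_length_lt S B i : In i S -> In i B -> length (minus S B) < length S.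
Proof.
  intros HS HB. destruct (Nat.lt_ge_cases (length (minus S B)) (length S)) as [|Hge]; auto.
  pose proof (filter_length_forallb _ S (Nat.le_antisymm _ _ (filter_length_le _ _) Hge)) as Hall.
  rewrite forallb_forall in Hall. specialize (Hall i HS).
  apply Bool.negb_true_iff in Hall. rewrite (proj2 (mem_In i B) HB) in Hall. discriminate.
Qed.

Lemma minus_single_length A i : NoDup A -> In i A -> S (length (minus A [i])) = length A.
Proof.
  unfold minus, mem; simpl.
  induction 1 as [|a A Ha Hnd IH]; simpl; [intros []|intros [<-|Hi]].
  - rewrite Nat.eqb_refl; simpl. f_equal.
    erewrite filter_ext_in; [apply f_equal, filter_true|].
    intros j Hj; simpl. destruct (Nat.eqb_spec j a); subst; tauto.
  - destruct (Nat.eqb_spec a i); subst; [contradiction|]. simpl. rewrite IH; auto.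
Qed.

Lemma NoDup_Sorted_lt A : Sorted lt A -> NoDup A.
Proof.
  intros H. apply Sorted_StronglySorted in H; [|intros x y z; lia].
  induction H as [|a A _ IH HF]; constructor; auto. intros Hin.
  rewrite Forall_forall in HF. specialize (HF a Hin). lia.
Qed.

Fixpoint sublists (l : list nat) : list (list nat) :=
  match l with
  | [] => [[]]
  | a :: t => map (cons a) (sublists t) ++ sublists t
  end.

Lemma sublists_incl l A : In A (sublists l) -> incl A l.
Proof.
  revert A; induction l; simpl; intros A H.
  - destruct H as [<-|[]]. intros x [].
  - apply in_app_iff in H as [H|H].
    + apply in_map_iff in H as [A' [<- H]].
      intros y [<-|Hy]; [left; auto|right; apply (IHl A'); auto].
    + intros y Hy; right; apply (IHl A); auto.
Qed.

Lemma NoDup_sublists l : NoDup l -> NoDup (sublists l).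
Proof.
  induction 1 as [|a l Ha _ IH]; simpl; [repeat constructor; auto|].
  apply NoDup_app; try apply NoDup_map_cons; auto.
  intros A HA HA'. apply in_map_iff in HA as [A' [<- _]].
  apply sublists_incl in HA'. apply Ha, HA'. left; auto.
Qed.

Lemma Sorted_in_sublists_seq k : forall m A, Sorted lt A ->
  (forall a, In a A -> m <= a < m + k) -> In A (sublists (seq m k)).
Proof.
  induction k; intros m A HS HA; simpl.
  - destruct A as [|a A]; [left; auto|]. specialize (HA a (or_introl eq_refl)); lia.
  - apply in_app_iff. destruct A as [|a A].
    + right. apply IHk; auto. intros a [].
    + apply Sorted_StronglySorted in HS; [|intros x y z; lia].
      apply StronglySorted_inv in HS as [HS HF]. rewrite Forall_forall in HF.
      pose proof (HA a (or_introl eq_refl)).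
      destruct (Nat.eq_dec a m) as [->|].
      * left. apply in_map, IHk; [apply StronglySorted_Sorted; auto|].
        intros b Hb. specialize (HF b Hb). specialize (HA b (or_intror Hb)). lia.
      * right. apply IHk.
        -- apply StronglySorted_Sorted; constructor; auto. apply Forall_forall; auto.
        -- intros b [<-|Hb]; [lia|]. specialize (HF b Hb). specialize (HA b (or_intror Hb)). lia.
Qed.

Definition select (w : list bool) (A : list nat) : list bool := map (fun j => nth j w false) A.

Lemma select_ext c c' A :
  (forall j, In j A -> nth j c false = nth j c' false) -> select c A = select c' A.
Proof. intros H. apply map_ext_in. auto. Qed.

Lemma nth_of_select_eq c c' A j : select c A = select c' A -> In j A ->
  nth j c false = nth j c' false.
Proof.
  induction A; simpl; intros H Hj; [contradiction|]. injection H as H1 H2.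
  destruct Hj as [<-|Hj]; auto.
Qed.

Lemma nth_map_seq (f : nat -> bool) L j :
  nth j (map f (seq 0 L)) false = if j <? L then f j else false.
Proof.
  destruct (Nat.ltb_spec j L).
  - rewrite nth_indep with (d' := f 0) by (rewrite length_map, length_seq; auto).
    rewrite map_nth, seq_nth; auto.
  - apply nth_overflow. rewrite length_map, length_seq; auto.
Qed.

Definition set_bit (w : list bool) i b :=
  map (fun j => if j =? i then b else nth j w false) (seq 0 (length w)).

Lemma length_set_bit w i b : length (set_bit w i b) = length w.
Proof. unfold set_bit; rewrite length_map, length_seq; auto. Qed.

Lemma nth_set_bit_ne w i b j : j <> i -> nth j (set_bit w i b) false = nth j w false.
Proof.
  intros H. unfold set_bit. rewrite nth_map_seq. destruct (Nat.ltb_spec j (length w)).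
  - apply Nat.eqb_neq in H. rewrite H; auto.
  - symmetry; apply nth_overflow; auto.
Qed.

Lemma nth_set_bit_eq w i b : i < length w -> nth i (set_bit w i b) false = b.
Proof.
  intros H. unfold set_bit. rewrite nth_map_seq. apply Nat.ltb_lt in H.
  rewrite H, Nat.eqb_refl; auto.
Qed.

Definition clear_bits (A : list nat) (c : list bool) :=
  map (fun j => if mem j A then false else nth j c false) (seq 0 (length c)).

Lemma length_clear_bits A c : length (clear_bits A c) = length c.
Proof. unfold clear_bits; rewrite length_map, length_seq; auto. Qed.

Lemma nth_clear_bits_in A c j : In j A -> nth j (clear_bits A c) false = false.
Proof.
  intros H. unfold clear_bits. rewrite nth_map_seq. apply mem_In in H. rewrite H.
  destruct (_ <? _); auto.
Qed.

Lemma nth_clear_bits_out A c j : ~ In j A -> nth j (clear_bits A c) false = nth j c false.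
Proof.
  intros H. unfold clear_bits. rewrite nth_map_seq.
  destruct (mem j A) eqn:E; [apply mem_In in E; contradiction|].
  destruct (Nat.ltb_spec j (length c)); auto. symmetry; apply nth_overflow; auto.
Qed.

Definition sumR (l : list R) : R := fold_right Rplus 0%R l.

Lemma sumR_app l1 l2 : sumR (l1 ++ l2) = (sumR l1 + sumR l2)%R.
Proof. induction l1; simpl; [ring|]. rewrite IHl1; ring. Qed.

Lemma INR_list_sum {A} (f : A -> nat) l :
  INR (list_sum (map f l)) = sumR (map (fun x => INR (f x)) l).
Proof. induction l; simpl; auto. rewrite plus_INR, IHl; auto. Qed.

Lemma sumR_le {A} (f g : A -> R) l : (forall x, In x l -> (f x <= g x)%R) ->
  (sumR (map f l) <= sumR (map g l))%R.
Proof.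
  induction l; simpl; intros H; [lra|].
  pose proof (H a (or_introl eq_refl)). pose proof (IHl (fun x Hx => H x (or_intror Hx))). lra.
Qed.

Lemma sumR_scal {A} (c : R) (g : A -> R) l :
  sumR (map (fun x => c * g x)%R l) = (c * sumR (map g l))%R.
Proof. induction l; simpl; [ring|]. rewrite IHl; ring. Qed.

Definition avoids_below (F : list nat -> list bool -> Prop) n w :=
  length w = n /\ forall A, (forall a, In a A -> a < n) -> ~ F A (select w A).

Section CountingLocalLemma.

Variable n : nat.
Variable forbidden : list nat -> list bool -> Prop.
Hypothesis forbidden_sorted : forall A x, forbidden A x -> Sorted lt A.

Definition avoids (D : list nat) (w : list bool) : Prop :=
  length w = n /\ (forall j, ~ In j D -> nth j w false = false) /\
  forall A, incl A D -> ~ forbidden A (select w A).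

Definition avoiders D := filter (fun w => holds (avoids D w)) (words n).

Definition count D := length (avoiders D).

Lemma In_avoiders D w : In w (avoiders D) <-> avoids D w.
Proof.
  unfold avoiders. rewrite filter_In, holds_true, In_words. split; [tauto|].
  intros H; split; auto; apply H.
Qed.

Lemma avoids_ext D D' w : (forall j, In j D <-> In j D') -> avoids D w -> avoids D' w.
Proof.
  intros H [Hl [Hz Hf]]. repeat split; auto.
  - intros j Hj; apply Hz; rewrite H; auto.
  - intros A HA; apply Hf; intros a Ha; apply H, HA; auto.
Qed.

Lemma count_ext D D' : (forall j, In j D <-> In j D') -> count D = count D'.
Proof.
  intros H. unfold count, avoiders. f_equal. apply filter_ext. intros w. apply holds_iff.
  split; apply avoids_ext; intros j; [|symmetry]; apply H.
Qed.

Definition bounded (D : list nat) := forall j, In j D -> j < n.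

Lemma bounded_minus D B : bounded D -> bounded (minus D B).
Proof. intros H j Hj. apply In_minus in Hj. apply H; tauto. Qed.

Definition patterns_through D i :=
  filter (fun P => holds (forbidden (fst P) (snd P) /\ In i (fst P) /\ incl (fst P) D))
    (flat_map (fun A => map (pair A) (words (length A))) (sublists (seq 0 n))).

Lemma NoDup_patterns_through D i : NoDup (patterns_through D i).
Proof.
  apply NoDup_filter, NoDup_flat_map_disjoint.
  - apply NoDup_sublists, seq_NoDup.
  - intros A _. apply Injective_map_NoDup; [|apply NoDup_words].
    intros x y E; injection E; auto.
  - intros A A' y _ _ H1 H2. apply in_map_iff in H1 as [? [<- _]].
    apply in_map_iff in H2 as [? [E _]]. injection E; auto.
Qed.

Lemma In_patterns_through D i P : In P (patterns_through D i) ->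
  forbidden (fst P) (snd P) /\ In i (fst P) /\ incl (fst P) D.
Proof. unfold patterns_through. rewrite filter_In, holds_true. tauto. Qed.

Lemma patterns_through_intro D i A x : bounded D -> incl A D -> In i A ->
  forbidden A x -> length x = length A -> In (A, x) (patterns_through D i).
Proof.
  intros HD HAS HiA HF Hx. apply filter_In. split.
  - apply in_flat_map. exists A. split.
    + apply Sorted_in_sublists_seq; [eapply forbidden_sorted; eauto|].
      intros a Ha. specialize (HD a (HAS a Ha)). lia.
    + apply in_map, In_words; auto.
  - apply holds_true; auto.
Qed.

Definition completions D i P :=
  filter (fun c => holds (select c (fst P) = snd P /\
                          exists w b, avoids (minus D [i]) w /\ c = set_bit w i b))
    (words n).

Lemma set_bit_inj w w' i b b' : i < length w -> length w = length w' ->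
  nth i w false = false -> nth i w' false = false ->
  set_bit w i b = set_bit w' i b' -> w = w' /\ b = b'.
Proof.
  intros Hi Hl Hw Hw' E.
  assert (b = b') as <-.
  { rewrite <- (nth_set_bit_eq w i b), <- (nth_set_bit_eq w' i b') by lia. rewrite E; auto. }
  split; auto. apply nth_ext with (d := false) (d' := false); auto.
  intros j _. destruct (Nat.eq_dec j i) as [->|]; [congruence|].
  rewrite <- (nth_set_bit_ne w i b j), <- (nth_set_bit_ne w' i b j), E; auto.
Qed.

Lemma set_bit_avoids_or_completes D i w b : bounded D -> In i D -> avoids (minus D [i]) w ->
  avoids D (set_bit w i b) \/
  exists P, In P (patterns_through D i) /\ In (set_bit w i b) (completions D i P).
Proof.
  intros HD Hi Hw. pose proof Hw as [Hl [Hz Hf]].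
  set (c := set_bit w i b).
  assert (Hcl : length c = n) by (unfold c; rewrite length_set_bit; auto).
  assert (Hcz : forall j, ~ In j D -> nth j c false = false).
  { intros j Hj. unfold c. rewrite nth_set_bit_ne by congruence.
    apply Hz. rewrite In_minus; tauto. }
  destruct (classic (avoids D c)) as [|Hc]; [left; auto|right].
  assert (exists A, incl A D /\ forbidden A (select c A)) as [A [HAS HF]].
  { apply NNPP; intros Hne. apply Hc. repeat split; auto.
    intros A HA HF. apply Hne. eauto. }
  assert (HiA : In i A).
  { apply NNPP; intros HiA. apply (Hf A).
    - intros a Ha. apply In_minus. split; auto. intros [<-|[]]; contradiction.
    - replace (select w A) with (select c A); auto. apply select_ext.
      intros j Hj. apply nth_set_bit_ne. intros ->; contradiction. }
  exists (A, select c A). split.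
  - apply patterns_through_intro; auto. unfold select; rewrite length_map; auto.
  - apply filter_In. split; [apply In_words; auto|].
    apply holds_true. split; auto. exists w, b; auto.
Qed.

Lemma count_minus_one_le D i : bounded D -> In i D ->
  2 * count (minus D [i]) <=
  count D + list_sum (map (fun P => length (completions D i P)) (patterns_through D i)).
Proof.
  intros HD Hi.
  set (G := avoiders (minus D [i])).
  assert (HG : forall w, In w G -> avoids (minus D [i]) w) by (intros; apply In_avoiders; auto).
  assert (Hwi : forall w, In w G -> nth i w false = false).
  { intros w Hw. apply HG in Hw. apply Hw. rewrite In_minus. intros [_ H]; apply H; left; auto. }
  assert (HGb : forall wb, In wb (map (fun w => (w, false)) G ++ map (fun w => (w, true)) G) ->
            In (fst wb) G).
  { intros wb Hwb. apply in_app_iff in Hwb as [H|H]; apply in_map_iff in H as [? [<- H]]; auto. }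
  replace (2 * count (minus D [i]))
    with (length (map (fun w => (w, false)) G ++ map (fun w => (w, true)) G))
    by (rewrite length_app, !length_map; unfold count; fold G; lia).
  replace (list_sum (map (fun P => length (completions D i P)) (patterns_through D i)))
    with (length (concat (map (completions D i) (patterns_through D i))))
    by (rewrite length_concat, map_map; auto).
  unfold count at 1. rewrite <- length_app.
  apply (length_le_of_injective_rel (list_eq_dec Bool.bool_dec)
           (fun wb c => c = set_bit (fst wb) i (snd wb))).
  - apply NoDup_app; try (apply Injective_map_NoDup; [intros x y E; injection E; auto|];
                          apply NoDup_filter, NoDup_words).
    intros a Ha Hb. apply in_map_iff in Ha as [? [<- _]].
    apply in_map_iff in Hb as [? [E _]]; discriminate.
  - intros [w b] Hwb. exists (set_bit w i b). split; auto.
    rewrite in_app_iff, In_avoiders, in_concat.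
    destruct (set_bit_avoids_or_completes D i w b HD Hi (HG w (HGb _ Hwb)))
      as [|[P [HP Hc]]]; [left; auto|right].
    exists (completions D i P). split; auto. apply in_map; auto.
  - intros [w b] [w' b'] c H1 H2 -> E. simpl in *.
    apply HGb in H1, H2. destruct (HG w H1) as [Hl _], (HG w' H2) as [Hl' _].
    apply set_bit_inj in E as [-> ->]; auto. rewrite Hl; apply HD; auto. congruence.
Qed.

(* Clearing the bits of [A] is injective on the completions exhibiting [(A, x)],
   and lands in the avoiders of [D \ A]. *)
Lemma completions_length_le D i P : In P (patterns_through D i) ->
  length (completions D i P) <= count (minus D (fst P)).
Proof.
  destruct P as [A x]; simpl. intros HP. apply In_patterns_through in HP as [_ [HiA _]].
  unfold count. apply (length_le_of_injective_rel (list_eq_dec Bool.bool_dec)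
                         (fun c c' => c' = clear_bits A c)).
  - apply NoDup_filter, NoDup_words.
  - intros c Hc. apply filter_In in Hc as [_ Hc].
    apply holds_true in Hc as [_ [w [b [[Hl [Hz Hf]] ->]]]].
    exists (clear_bits A (set_bit w i b)). split; auto. apply In_avoiders.
    repeat split.
    + rewrite length_clear_bits, length_set_bit; auto.
    + intros j Hj. rewrite In_minus in Hj. destruct (classic (In j A)).
      * apply nth_clear_bits_in; auto.
      * rewrite nth_clear_bits_out, nth_set_bit_ne by (auto; intros ->; contradiction).
        apply Hz. rewrite In_minus. tauto.
    + intros Q HQ. assert (HQA : forall q, In q Q -> In q D /\ ~ In q A)
        by (intros q Hq; apply In_minus, HQ; auto).
      replace (select (clear_bits A (set_bit w i b)) Q) with (select w Q).
      * apply Hf. intros q Hq. apply In_minus. destruct (HQA q Hq) as [HqS HqA].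
        split; auto. intros [<-|[]]; contradiction.
      * apply select_ext. intros q Hq. destruct (HQA q Hq) as [_ HqA].
        rewrite nth_clear_bits_out, nth_set_bit_ne by (auto; intros ->; contradiction); auto.
  - intros c c' d Hc Hc' -> E.
    apply filter_In in Hc as [Hcw Hc], Hc' as [Hcw' Hc'].
    apply holds_true in Hc as [Hsel _], Hc' as [Hsel' _]. simpl in Hsel, Hsel'.
    apply In_words in Hcw, Hcw'.
    apply nth_ext with (d := false) (d' := false); [congruence|].
    intros j _. destruct (classic (In j A)).
    + eapply nth_of_select_eq; eauto. congruence.
    + rewrite <- (nth_clear_bits_out A c j), <- (nth_clear_bits_out A c' j), E; auto.
Qed.

Variable alpha : R.
Hypothesis alpha_pos : (0 < alpha)%R.
Hypothesis weight_bound : forall i (l : list (list nat * list bool)), NoDup l ->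
  (forall P, In P l -> forbidden (fst P) (snd P) /\ In i (fst P)) ->
  (sumR (map (fun P => alpha / alpha ^ length (fst P)) l) <= 2 - alpha)%R.

Definition ratio_bound k := forall D, bounded D -> length D <= k -> forall i, In i D ->
  (alpha * INR (count (minus D [i])) <= INR (count D))%R.

Lemma ratio_bound_iter k : ratio_bound k -> forall B D, NoDup B -> bounded D ->
  length D <= k -> incl B D ->
  (alpha ^ length B * INR (count (minus D B)) <= INR (count D))%R.
Proof.
  intros Hk B. induction B as [|b B IH]; intros D HB HD HDk HBS; simpl.
  - rewrite (count_ext _ D); [lra|]. intros j; rewrite In_minus; simpl; tauto.
  - inversion HB as [|? ? HbB HBnd]; subst.
    set (D' := minus D [b]).
    assert (HD'B : (alpha ^ length B * INR (count (minus D' B)) <= INR (count D'))%R).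
    { apply IH; auto.
      - apply bounded_minus; auto.
      - pose proof (filter_length_le (fun j => negb (mem j [b])) D). unfold D', minus. lia.
      - intros c Hc. apply In_minus. split; [apply HBS; right; auto|].
        intros [<-|[]]; contradiction. }
    assert (HDb : (alpha * INR (count D') <= INR (count D))%R)
      by (apply Hk; auto; apply HBS; left; auto).
    rewrite (count_ext (minus D (b :: B)) (minus D' B))
      by (intros j; unfold D'; rewrite !In_minus; simpl; tauto).
    pose proof (pow_lt alpha (length B) alpha_pos).
    assert ((alpha * (alpha ^ length B * INR (count (minus D' B))) <= alpha * INR (count D'))%R)
      by (apply Rmult_le_compat_l; lra).
    lra.
Qed.

Lemma completions_weight k D i P : ratio_bound k -> bounded D -> length D <= S k ->
  In i D -> In P (patterns_through D i) ->
  (INR (length (completions D i P)) <=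
   INR (count (minus D [i])) * (alpha / alpha ^ length (fst P)))%R.
Proof.
  intros Hk HD HDk Hi HP.
  pose proof HP as [HF [HiA HAS]]%In_patterns_through.
  set (A := fst P) in *. set (B := minus A [i]). set (D' := minus D [i]).
  assert (HnA : NoDup A) by (eapply NoDup_Sorted_lt, forbidden_sorted; eauto).
  assert (HBS : (alpha ^ length B * INR (count (minus D' B)) <= INR (count D'))%R).
  { apply (ratio_bound_iter k Hk).
    - apply NoDup_filter; auto.
    - apply bounded_minus; auto.
    - pose proof (minus_length_lt D [i] i Hi (or_introl eq_refl)). unfold D'. lia.
    - intros j Hj. unfold B in Hj. apply In_minus in Hj as [HjA Hji].
      apply In_minus; auto. }
  rewrite (count_ext (minus D' B) (minus D A)) in HBS.
  2:{ intros j. unfold D', B. rewrite !In_minus. simpl.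
      destruct (Nat.eq_dec i j) as [->|]; tauto. }
  pose proof (le_INR _ _ (completions_length_le D i P HP)) as Hc. fold A in Hc.
  rewrite <- (minus_single_length A i HnA HiA); simpl; fold B.
  pose proof (pow_lt alpha (length B) alpha_pos).
  replace (INR (count D') * (alpha / (alpha * alpha ^ length B)))%R
    with (INR (count D') / alpha ^ length B)%R by (field; lra).
  apply Rle_trans with (INR (count (minus D A))); auto.
  apply (Rmult_le_reg_l (alpha ^ length B)); auto.
  replace (alpha ^ length B * (INR (count D') / alpha ^ length B))%R
    with (INR (count D')) by (field; lra).
  lra.
Qed.

Lemma ratio_bound_step k : ratio_bound k -> ratio_bound (S k).
Proof.
  intros Hk D HD HDk i Hi.
  set (D' := minus D [i]).
  pose proof (le_INR _ _ (count_minus_one_le D i HD Hi)) as Hcount. fold D' in Hcount.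
  rewrite mult_INR, plus_INR, INR_list_sum in Hcount. simpl (INR 2) in Hcount.
  assert (Hsum : (sumR (map (fun P => INR (length (completions D i P))) (patterns_through D i))
                  <= INR (count D') * (2 - alpha))%R).
  { eapply Rle_trans.
    - apply (sumR_le _ (fun P => INR (count D') * (alpha / alpha ^ length (fst P)))%R).
      intros P HP. apply (completions_weight k); auto.
    - rewrite sumR_scal. apply Rmult_le_compat_l; [apply pos_INR|].
      apply (weight_bound i); [apply NoDup_patterns_through|].
      intros P HP. apply In_patterns_through in HP. tauto. }
  lra.
Qed.

Lemma ratio_bound_all k : ratio_bound k.
Proof.
  induction k; [|apply ratio_bound_step; auto].
  intros D _ HD i Hi. destruct D; simpl in *; [contradiction|lia].
Qed.

(* Deleting the points of [seq 0 n] one by one divides the count by at most [alpha]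
   each time, and the all-zero word avoids the empty support. *)
Lemma exists_avoiding_word : (forall x, ~ forbidden [] x) ->
  exists w, avoids_below forbidden n w.
Proof.
  intros Hnil. set (D := seq 0 n).
  assert (HD : bounded D) by (intros j Hj; apply in_seq in Hj; lia).
  pose proof (ratio_bound_iter n (ratio_bound_all n) D D (seq_NoDup _ _) HD
                (Nat.eq_le_incl _ _ (length_seq _ _)) (incl_refl _)) as H.
  assert (Hzero : In (repeat false n) (avoiders (minus D D))).
  { apply In_avoiders. repeat split.
    - apply repeat_length.
    - intros j _. apply nth_repeat.
    - intros [|a A] HA HF; [eapply Hnil; eauto|].
      destruct (proj1 (In_minus a D D) (HA a (or_introl eq_refl))); contradiction. }
  destruct (avoiders D) as [|w l] eqn:EG.
  - assert ((0 < INR (count (minus D D)))%R).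
    { apply lt_0_INR. unfold count. destruct (avoiders (minus D D)); simpl in *; lia. }
    pose proof (pow_lt alpha (length D) alpha_pos).
    unfold count at 2 in H. rewrite EG in H. simpl in H. nra.
  - assert (avoids D w) as [Hl [_ Hf]] by (apply In_avoiders; rewrite EG; left; auto).
    exists w. split; auto. intros A HA. apply Hf. intros a Ha. apply in_seq.
    specialize (HA a Ha). lia.
Qed.

End CountingLocalLemma.

Lemma sumR_geometric_tail r N K : (0 <= r < 1)%R ->
  (sumR (map (fun m => if N <=? m then r ^ m else 0) (seq 0 K)) <= r ^ N / (1 - r))%R.
Proof.
  intros Hr.
  assert (Htele : forall K, ((1 - r) * sumR (map (fun m => if N <=? m then r ^ m else 0) (seq 0 K))
                             + r ^ Nat.max K N = r ^ N)%R).
  { induction K0; [simpl; ring|].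
    rewrite seq_S, map_app, sumR_app. simpl map; simpl sumR.
    set (s := sumR _) in *.
    destruct (Nat.leb_spec N K0).
    - rewrite Nat.max_l in IHK0 by lia. rewrite Nat.max_l by lia. simpl pow.
      rewrite <- IHK0. ring.
    - rewrite Nat.max_r in IHK0 by lia. rewrite Nat.max_r by lia.
      rewrite <- IHK0 at 2. ring. }
  specialize (Htele K). pose proof (pow_le r (Nat.max K N) (proj1 Hr)).
  apply (Rmult_le_reg_l (1 - r)); [lra|].
  replace ((1 - r) * (r ^ N / (1 - r)))%R with (r ^ N)%R by (field; lra). lra.
Qed.

Lemma sumR_indicator (h : nat -> R) j K : j < K ->
  sumR (map (fun m => h m * (if j =? m then 1 else 0))%R (seq 0 K)) = h j.
Proof.
  induction K; intros H; [lia|]. rewrite seq_S, map_app, sumR_app. simpl.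
  destruct (Nat.eqb_spec j K) as [->|]; [|rewrite IHK by lia; ring].
  replace (sumR _) with 0%R; [ring|].
  assert (Hlt : forall m, In m (seq 0 K) -> m < K) by (intros m Hm; apply in_seq in Hm; lia).
  clear IHK H. induction (seq 0 K) as [|m l IHl]; simpl; auto.
  destruct (Nat.eqb_spec K m); [specialize (Hlt m (or_introl eq_refl)); lia|].
  rewrite <- IHl by (intros; apply Hlt; right; auto). ring.
Qed.

Lemma sumR_group_by {A} (g : A -> nat) (h : nat -> R) (l : list A) K :
  (forall P, In P l -> g P < K) ->
  sumR (map (fun P => h (g P)) l) =
  sumR (map (fun m => h m * INR (length (filter (fun P => g P =? m) l)))%R (seq 0 K)).
Proof.
  induction l as [|a l IH]; intros HK; simpl.
  - induction (seq 0 K); simpl; auto. rewrite <- IHl. ring.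
  - rewrite IH by (intros; apply HK; right; auto).
    rewrite <- (sumR_indicator h (g a) K) at 1 by (apply HK; left; auto).
    clear IH HK. induction (seq 0 K) as [|m ms IHm]; simpl; [ring|].
    rewrite <- IHm. destruct (g a =? m); simpl length; rewrite ?S_INR; ring.
Qed.

Lemma Rpower_pos x y : (0 < Rpower x y)%R.
Proof. unfold Rpower; apply exp_pos. Qed.

Definition ceil_up (g : R) (m : nat) := Z.to_nat (up (g * INR m)).

Lemma ceil_up_bounds g m : (0 <= g)%R ->
  (g * INR m < INR (ceil_up g m) <= g * INR m + 1)%R.
Proof.
  intros Hg. unfold ceil_up. pose proof (archimed (g * INR m)) as [H1 H2].
  assert (0 <= g * INR m)%R by (apply Rmult_le_pos; auto; apply pos_INR).
  assert (0 <= up (g * INR m))%Z by (apply le_IZR; lra).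
  rewrite (INR_IZR_INZ (Z.to_nat _)), Z2Nat.id by auto. lra.
Qed.

Lemma pow2_ceil_up_le g m : (0 <= g)%R -> (2 ^ ceil_up g m <= 2 * Rpower 2 (g * INR m))%R.
Proof.
  intros Hg. rewrite <- Rpower_pow by lra.
  destruct (ceil_up_bounds g m Hg).
  apply Rle_trans with (Rpower 2 (g * INR m + 1)); [apply Rle_Rpower; lra|].
  rewrite Rpower_plus, Rpower_1 by lra. lra.
Qed.

Section Constants.

Variable gamma : R.
Hypothesis gamma_bounds : (0 < gamma < 1)%R.

(* The local-lemma weight [alpha] and [ratio] split [2^gamma] as [alpha * ratio]
   with [1 < alpha < 2] and [ratio < 1]. *)
Definition alpha := Rpower 2 ((1 + gamma) / 2).
Definition ratio := Rpower 2 ((gamma - 1) / 2).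

Lemma alpha_bounds : (1 < alpha < 2)%R.
Proof.
  unfold alpha. split.
  - apply Rle_lt_trans with (Rpower 2 0); [rewrite Rpower_O; lra|apply Rpower_lt; lra].
  - apply Rlt_le_trans with (Rpower 2 1); [apply Rpower_lt; lra|rewrite Rpower_1; lra].
Qed.

Lemma ratio_bounds : (0 < ratio < 1)%R.
Proof.
  unfold ratio. split; [apply Rpower_pos|].
  apply Rlt_le_trans with (Rpower 2 0); [apply Rpower_lt; lra|rewrite Rpower_O; lra].
Qed.

Lemma alpha_ratio_pow m : ((alpha * ratio) ^ m = Rpower 2 (gamma * INR m))%R.
Proof.
  unfold alpha, ratio. rewrite <- Rpower_plus.
  replace ((1 + gamma) / 2 + (gamma - 1) / 2)%R with gamma by field.
  rewrite <- Rpower_pow by apply Rpower_pos. rewrite Rpower_mult. f_equal.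
Qed.

Lemma exists_threshold : exists N, 1 <= N /\
  (2 * alpha * (ratio ^ N / (1 - ratio)) <= 2 - alpha)%R.
Proof.
  destruct alpha_bounds, ratio_bounds.
  assert (Hy : (0 < (2 - alpha) * (1 - ratio) / (2 * alpha))%R).
  { apply Rdiv_lt_0_compat; [apply Rmult_lt_0_compat|]; lra. }
  destruct (pow_lt_1_zero ratio ltac:(rewrite Rabs_right; lra) _ Hy) as [N0 HN0].
  exists (Nat.max N0 1). split; [lia|].
  specialize (HN0 (Nat.max N0 1) ltac:(lia)).
  rewrite Rabs_right in HN0 by (apply Rle_ge, pow_le; lra).
  set (q := (ratio ^ Nat.max N0 1)%R) in *.
  apply (Rmult_lt_compat_l (2 * alpha)) in HN0; [|lra].
  replace (2 * alpha * ((2 - alpha) * (1 - ratio) / (2 * alpha)))%R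
    with ((2 - alpha) * (1 - ratio))%R in HN0 by (field; lra).
  apply (Rmult_le_reg_r (1 - ratio)); [lra|].
  replace (2 * alpha * (q / (1 - ratio)) * (1 - ratio))%R with (2 * alpha * q)%R by (field; lra).
  lra.
Qed.

Variable N : nat.

Definition compressible (A : list nat) (x : list bool) : Prop :=
  Sorted lt A /\ N <= length A /\
  forall t, In t A -> ~ K_ge (code_pattern (A, x)) t (gamma * INR (length A)).

(* Fewer than [2^(gamma m + 1)] compressible patterns of size [m] pass through a
   given point, so those of size [m] weigh at most [2 alpha ratio^m] in total. *)
Lemma size_class_weight i (l : list (list nat * list bool)) m : NoDup l ->
  (forall P, In P l -> compressible (fst P) (snd P) /\ In i (fst P)) ->
  (alpha / alpha ^ m * INR (length (filter (fun P => length (fst P) =? m) l))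
   <= 2 * alpha * (if N <=? m then ratio ^ m else 0))%R.
Proof.
  intros Hnd Hl.
  pose proof alpha_bounds as Ha. pose proof ratio_bounds as Hr.
  set (lm := filter (fun P => length (fst P) =? m) l).
  assert (Hlm : forall P, In P lm ->
            compressible (fst P) (snd P) /\ In i (fst P) /\ length (fst P) = m).
  { intros P HP. apply filter_In in HP as [HP Hm]. apply Nat.eqb_eq in Hm.
    destruct (Hl P HP); auto. }
  pose proof (pow_lt alpha m ltac:(lra)) as Ham.
  destruct (Nat.leb_spec N m).
  - assert (Hc : length lm < 2 ^ ceil_up gamma m).
    { apply (few_simple_patterns lm i (gamma * INR m)).
      - apply NoDup_filter; auto.
      - intros P HP. destruct (Hlm P HP) as [[_ [_ Hk]] [Hi Hm]].
        rewrite Hm, <- surjective_pairing in Hk. apply Hk; auto.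
      - apply Rlt_le, ceil_up_bounds. lra. }
    apply lt_INR in Hc. rewrite pow_INR in Hc. replace (INR 2) with 2%R in Hc by (simpl; lra).
    pose proof (pow2_ceil_up_le gamma m ltac:(lra)) as H2.
    rewrite <- alpha_ratio_pow, Rpow_mult_distr in H2.
    apply Rle_trans with (alpha / alpha ^ m * (2 * (alpha ^ m * ratio ^ m)))%R.
    + apply Rmult_le_compat_l; [apply Rlt_le, Rdiv_lt_0_compat|]; lra.
    + right. field. lra.
  - replace lm with (@nil (list nat * list bool)); [simpl; lra|].
    destruct lm as [|P lm'] eqn:E; auto.
    destruct (Hlm P (or_introl eq_refl)) as [[_ [HN' _]] [_ Hm]]. lia.
Qed.

Lemma compressible_weight_bound :
  (2 * alpha * (ratio ^ N / (1 - ratio)) <= 2 - alpha)%R ->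
  forall i (l : list (list nat * list bool)), NoDup l ->
  (forall P, In P l -> compressible (fst P) (snd P) /\ In i (fst P)) ->
  (sumR (map (fun P => alpha / alpha ^ length (fst P)) l) <= 2 - alpha)%R.
Proof.
  intros HN i l Hnd Hl.
  pose proof alpha_bounds as Ha. pose proof ratio_bounds as Hr.
  set (K := S (list_max (map (fun P => length (fst P)) l))).
  rewrite (sumR_group_by (fun P => length (fst P)) (fun m => alpha / alpha ^ m)%R l K).
  2:{ intros P HP. apply Nat.lt_succ_r.
      pose proof (proj1 (list_max_le (map (fun P => length (fst P)) l) _) (le_n _)) as Hmax.
      rewrite Forall_forall in Hmax.
      apply Hmax, (in_map (fun P => length (fst P))); auto. }
  eapply Rle_trans; [|exact HN].
  eapply Rle_trans.
  - apply (sumR_le _ (fun m => 2 * alpha * (if N <=? m then ratio ^ m else 0))%R).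
    intros m _. apply (size_class_weight i); auto.
  - rewrite sumR_scal. apply Rmult_le_compat_l; [lra|]. apply sumR_geometric_tail. lra.
Qed.

End Constants.

Section Compactness.

Variable F : list nat -> list bool -> Prop.

Lemma avoids_below_firstn m w j : avoids_below F m w -> j <= m ->
  avoids_below F j (firstn j w).
Proof.
  intros [Hl Hf] Hj. split; [rewrite length_firstn; lia|].
  intros A HA. replace (select (firstn j w) A) with (select w A).
  - apply Hf. intros a Ha; specialize (HA a Ha); lia.
  - apply select_ext. intros a Ha. rewrite nth_firstn.
    specialize (HA a Ha). apply Nat.ltb_lt in HA. rewrite HA; auto.
Qed.

Definition extendable (u : list bool) :=
  forall k, exists w, avoids_below F (length u + k) w /\ firstn (length u) w = u.

Lemma firstn_S_nth (w : list bool) j : j < length w ->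
  firstn (S j) w = firstn j w ++ [nth j w false].
Proof.
  revert w; induction j; intros [|b w] Hw; simpl in *; try lia; auto.
  rewrite IHj by lia. auto.
Qed.

(* Koenig's lemma: if both one-bit extensions failed at depths [k0] and [k1], a long
   enough witness for [u] would restrict to a witness for one of them. *)
Lemma extendable_snoc u : extendable u -> extendable (u ++ [false]) \/ extendable (u ++ [true]).
Proof.
  intros Hu. apply NNPP. intros Hn. apply not_or_and in Hn as [H0 H1].
  apply not_all_ex_not in H0 as [k0 H0]. apply not_all_ex_not in H1 as [k1 H1].
  destruct (Hu (S (Nat.max k0 k1))) as [w [Hg Hpre]].
  assert (Hlw : length w = length u + S (Nat.max k0 k1)) by apply Hg.
  rewrite length_app in H0, H1. simpl in H0, H1.
  assert (Hwb : firstn (S (length u)) w = u ++ [nth (length u) w false])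
    by (rewrite firstn_S_nth, Hpre by lia; auto).
  destruct (nth (length u) w false); [apply H1; exists (firstn (length u + 1 + k1) w)
                                     |apply H0; exists (firstn (length u + 1 + k0) w)];
    (split; [apply avoids_below_firstn with (m := length u + S (Nat.max k0 k1)); auto; lia|]);
    rewrite firstn_firstn, Nat.min_l, Nat.add_1_r by lia; auto.
Qed.

Definition next_bit u : bool :=
  if ClassicalEpsilon.excluded_middle_informative (extendable (u ++ [false])) then false else true.

Fixpoint greedy_prefix k : list bool :=
  match k with 0 => [] | S k' => greedy_prefix k' ++ [next_bit (greedy_prefix k')] end.

Lemma length_greedy_prefix k : length (greedy_prefix k) = k.
Proof. induction k; simpl; auto. rewrite length_app, IHk; simpl; lia. Qed.

Lemma nth_greedy_prefix k j : j < k ->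
  nth j (greedy_prefix k) false = nth j (greedy_prefix (S j)) false.
Proof.
  induction k; intros H; [lia|]. destruct (Nat.eq_dec j k) as [->|]; auto.
  simpl. rewrite app_nth1 by (rewrite length_greedy_prefix; lia). apply IHk; lia.
Qed.

Hypothesis finite_avoiders : forall n, exists w, avoids_below F n w.

Lemma extendable_greedy_prefix k : extendable (greedy_prefix k).
Proof.
  induction k; simpl.
  - intros k. destruct (finite_avoiders k) as [w Hw]. exists w; auto.
  - unfold next_bit. destruct ClassicalEpsilon.excluded_middle_informative; auto.
    destruct (extendable_snoc _ IHk); auto. contradiction.
Qed.

Lemma avoids_below_greedy_prefix m : avoids_below F m (greedy_prefix m).
Proof.
  destruct (extendable_greedy_prefix m 0) as [w [Hg Hp]].
  rewrite length_greedy_prefix, Nat.add_0_r in *.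
  assert (length w = m) by apply Hg.
  rewrite firstn_all2 in Hp by lia. subst; auto.
Qed.

Lemma exists_avoiding_sequence : exists omega : nat -> bool, forall A, ~ F A (map omega A).
Proof.
  exists (fun j => nth j (greedy_prefix (S j)) false). intros A.
  set (m := S (list_max A)).
  assert (HA : forall a, In a A -> a < m).
  { intros a Ha. apply Nat.lt_succ_r.
    pose proof (proj1 (list_max_le A _) (le_n _)) as Hmax.
    rewrite Forall_forall in Hmax; auto. }
  replace (map _ A) with (select (greedy_prefix m) A).
  - apply (avoids_below_greedy_prefix m), HA.
  - apply map_ext_in. intros a Ha. apply nth_greedy_prefix; auto.
Qed.

End Compactness.

Local Open Scope R_scope.

Theorem theorem1 :
  forall gamma : R, 0 < gamma < 1 ->
  exists (omega : nat -> bool) (N : nat),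
    forall A : list nat,
      Sorted Nat.lt A ->
      (N <= length A)%nat ->
      exists t : nat, In t A /\
        K_ge (cpair (code_finset A) (code_bits (restrict omega A))) t
             (gamma * INR (length A)).
Proof.
  intros gamma Hg.
  destruct (exists_threshold gamma Hg) as [N [HN1 HN]].
  assert (Hfinite : forall n, exists w, avoids_below (compressible gamma N) n w).
  { intros n. apply (exists_avoiding_word n _ (fun A x H => proj1 H) (alpha gamma)).
    - pose proof (alpha_bounds gamma Hg); lra.
    - apply compressible_weight_bound; auto.
    - intros x [_ [HN' _]]; simpl in HN'; lia. }
  destruct (exists_avoiding_sequence _ Hfinite) as [omega Homega].
  exists omega, N. intros A HS HN'.
  apply NNPP; intros Hno. apply (Homega A). repeat split; auto.
  intros t Ht HK. apply Hno. exists t; auto.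
Qed.
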